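(* Let $\mathcal S$ be the toy stabilizer group of a maximal information (pure) state on $N$ elementary systems, and let parties $A$ and $B$ hold $N_A$ and $N_B$ of these elementary systems respectively, with $N_A+N_B = N$. Let $\mathcal S_A$ (resp. $\mathcal S_B$) be the subgroup of elements of $\mathcal S$ acting as the identity on every elementary system of $B$ (resp. of $A$), and $\mathcal S_A\cdot\mathcal S_B$ the group they generate. Then the state is entangled (with respect to $A|B$) if and only if $\mathcal S\neq\mathcal S_A\cdot\mathcal S_B$.
   Context: Toy Pauli matrices $\mathcal{X} = \mathrm{diag}(1,-1,1,-1)$, $\mathcal{Y} = \mathrm{diag}(1,-1,-1,1)$, $\mathcal{Z} = \mathrm{diag}(1,1,-1,-1)$; toy Pauli group $G_N = \{\alpha\,p_1\otimes\cdots\otimes p_N: p_i\in\{\mathbb 1_4,\mathcal X,\mathcal Y,\mathcal Z\},\alpha=\pm1\}$. Elements $g,h\in G_N$ ''commute'' if their images under the homomorphism $\mathcal X_k\mapsto X_k$, $\mathcal Z_k\mapsto Z_k$, $-\mathbb 1\mapsto -\mathbb 1$ into the $N$-qubit Pauli group commute. A toy stabilizer group is a subgroup of $G_N$ of pairwise ''commuting'' elements not containing $-\mathbb 1$; its epistemic state is the set of ontic states $e_{i_1}\otimes\cdots\otimes e_{i_N}$ fixed by all its elements. It is a maximal information state if it has $N$ independent generators. A product state between $A$ and $B$ is an epistemic state of the form $E_A\times E_B = \{(a,b): a\in E_A, b\in E_B\}$ with $E_A,E_B$ valid epistemic states on $A$ and $B$. A pure state is entangled if it cannot be written as a product state of epistemic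 states on $A$ and $B$. *)

From HB Require Import structures.
From mathcomp Require Import all_boot all_order all_algebra all_fingroup.
Set Implicit Arguments. Unset Strict Implicit. Unset Printing Implicit Defensive.
Import GRing.Theory Num.Theory.

Inductive tpauli := tI | tX | tY | tZ.

Definition tp_code (p : tpauli) : bool * bool :=
  match p with tI => (false, false) | tX => (true, false)
             | tZ => (false, true) | tY => (true, true) end.
Definition tp_decode (c : bool * bool) : tpauli :=
  match c with (false, false) => tI | (true, false) => tX
             | (false, true) => tZ | (true, true) => tY end.
Lemma tp_codeK : cancel tp_code tp_decode. Proof. by case. Qed.
HB.instance Definition _ := Finite.copy tpauli (can_type tp_codeK).

(* The diagonal entries of the toy Pauli matrices (ontic states e_1..e_4 are
   indexed by 'I_4 = {0,1,2,3}):
   1 = diag(1,1,1,1), X = diag(1,-1,1,-1), Y = diag(1,-1,-1,1), Z = diag(1,1,-1,-1). *)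
Definition tdiag (p : tpauli) (i : 'I_4) : int :=
  match p, nat_of_ord i with
  | tI, _ => 1
  | tX, 0 => 1 | tX, 1 => -1 | tX, 2 => 1 | tX, _ => -1
  | tY, 0 => 1 | tY, 1 => -1 | tY, 2 => -1 | tY, _ => 1
  | tZ, 0 => 1 | tZ, 1 => 1 | tZ, 2 => -1 | tZ, _ => -1
  end.

(* matrix product of toy Pauli matrices (they are diagonal, so XY = Z etc.) *)
Definition tmulp (p q : tpauli) : tpauli :=
  match p, q with
  | tI, r | r, tI => r
  | tX, tX | tY, tY | tZ, tZ => tI
  | tX, tY | tY, tX => tZ
  | tX, tZ | tZ, tX => tY
  | tY, tZ | tZ, tY => tX
  end.

Lemma tdiag_mul p q i : tdiag (tmulp p q) i = (tdiag p i * tdiag q i)%R.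
Proof. by case: i => [[|[|[|[|n]]]] Hi] //; case: p; case: q. Qed.

(* an element alpha p_1 (x) ... (x) p_N : first component true iff alpha = -1 *)
Definition toyP (T : finType) := (bool * {ffun T -> tpauli})%type.
HB.instance Definition _ (T : finType) := Finite.on (toyP T).

Section ToyGroup.
Variable T : finType.
Definition tmul (g h : toyP T) : toyP T :=
  (addb g.1 h.1, [ffun k => tmulp (g.2 k) (h.2 k)]).
Definition tone : toyP T := (false, [ffun => tI]).
Definition tinv (g : toyP T) : toyP T := g.
Lemma tmulA : associative tmul.
Proof.
move=> [a f] [b g] [c h]; rewrite /tmul /= addbA; congr pair.
by apply/ffunP => k; rewrite !ffunE; case: (f k); case: (g k); case: (h k).
Qed.
Lemma tmul1 : left_id tone tmul.
Proof. by move=> [a f]; rewrite /tmul /=; congr pair; apply/ffunP => k; rewrite !ffunE. Qed.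
Lemma tmulV : left_inverse tone tinv tmul.
Proof.
move=> [a f]; rewrite /tmul /= addbb; congr pair.
by apply/ffunP => k; rewrite !ffunE; case: (f k).
Qed.
End ToyGroup.
HB.instance Definition _ (T : finType) :=
  Finite_isGroup.Build (toyP T) (@tmulA T) (@tmul1 T) (@tmulV T).

Definition tminus1 (T : finType) : toyP T := (true, [ffun => tI]).

(* "commutation": images under X_k |-> X_k, Z_k |-> Z_k (hence Y_k = X_k Z_k |-> X_k Z_k),
   -1 |-> -1 in the N-qubit Pauli group.  A qubit Pauli is +-X^a Z^b (a,b bit vectors);
   two such commute iff sum_k (a_k b'_k + b_k a'_k) is even. *)
Definition xpart (p : tpauli) : bool := (p == tX) || (p == tY).
Definition zpart (p : tpauli) : bool := (p == tZ) || (p == tY).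
Definition tcomm (T : finType) (g h : toyP T) : bool :=
  ~~ odd (\sum_(k : T) ((xpart (g.2 k) && zpart (h.2 k)) + (zpart (g.2 k) && xpart (h.2 k)))).

Definition ontic (T : finType) := {ffun T -> 'I_4}.

(* g fixes the ontic state s: g e_s = alpha prod_k p_k(s_k) e_s = e_s *)
Definition tfixes (T : finType) (g : toyP T) (s : ontic T) : bool :=
  ((-1) ^+ g.1 * \prod_(k : T) tdiag (g.2 k) (s k) == 1 :> int)%R.

Definition is_tstab (T : finType) (S : {group toyP T}) : Prop :=
  {in S &, forall g h, tcomm g h} /\ tminus1 T \notin S.

Definition epi (T : finType) (S : {set toyP T}) : {set ontic T} :=
  [set s | [forall g in S, tfixes g s]].

Definition max_info (T : finType) (S : {group toyP T}) : Prop :=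
  exists gens : {set toyP T},
    [/\ #|gens| = #|T|, <<gens>>%g = S
      & {in gens, forall g, g \notin <<gens :\ g>>%g}].

Definition valid_epi (T : finType) (E : {set ontic T}) : Prop :=
  exists S : {group toyP T}, is_tstab S /\ E = epi S.

Definition subsys (T : finType) (A : {set T}) : finType := {k : T | k \in A}.
Definition restrict (T : finType) (A : {set T}) (s : ontic T) : ontic (subsys A) :=
  [ffun k => s (val k)].

Definition is_product (T : finType) (A : {set T}) (E : {set ontic T}) : Prop :=
  exists (EA : {set ontic (subsys A)}) (EB : {set ontic (subsys (~: A))}),
    [/\ valid_epi EA, valid_epi EB &
        E = [set s | (restrict A s \in EA) && (restrict (~: A) s \in EB)]].

Definition local_sub (T : finType) (S : {set toyP T}) (A : {set T}) : {set toyP T} :=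
  [set g in S | [forall k in ~: A, g.2 k == tI]].

From HB Require Import structures.
From mathcomp Require Import all_boot all_order all_algebra all_fingroup.
Set Implicit Arguments. Unset Strict Implicit. Unset Printing Implicit Defensive.
Import Order.TTheory GRing.Theory Num.Theory.

Local Open Scope ring_scope.

(* The sign [tsign g s] with which a toy Pauli [g] acts on an ontic state [s]
   is a character of the toy Pauli group, and its sum over all ontic states
   (the trace of [g]) vanishes unless [g] is [1] or [-1].  By orthogonality of
   characters, a toy stabilizer group contains every toy Pauli that fixes its
   epistemic state.  So if [epi S] is a product [E_A x E_B], the stabilizers of
   [E_A] and [E_B], extended by the identity, lie in [S_A] and [S_B]; hence
   [S_A S_B] has the same epistemic state as [S] and is therefore all of [S].
   Conversely, if [S = S_A S_B], restricting [S_A] and [S_B] to the systems of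
   [A] and of [B] gives toy stabilizer groups whose epistemic states multiply
   to [epi S]. *)

Section Sign.
Variable T : finType.
Implicit Types (g h : toyP T) (s : ontic T).

Definition tsign g s : int := (-1) ^+ g.1 * \prod_k tdiag (g.2 k) (s k).

Definition ttrace g : int := \sum_s tsign g s.

Lemma tfixesE g s : tfixes g s = (tsign g s == 1).
Proof. by []. Qed.

Lemma tsignM g h s : tsign (g * h)%g s = tsign g s * tsign h s.
Proof.
rewrite /tsign /= signr_addb mulrACA -big_split /=.
by congr (_ * _); apply: eq_bigr => k _; rewrite ffunE tdiag_mul.
Qed.

Lemma tsign1 s : tsign 1%g s = 1.
Proof. by rewrite /tsign expr0 mul1r big1 // => k _; rewrite ffunE. Qed.

Lemma tsign_sqr g s : tsign g s ^+ 2 = 1.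
Proof.
rewrite /tsign exprMn sqrr_sign mul1r -prodrXl big1 // => k _.
by case: (g.2 k); case: (s k) => [[|[|[|[|?]]]] ?].
Qed.

Lemma tsign_notfixes g s : ~~ tfixes g s -> tsign g s = -1.
Proof.
rewrite tfixesE; have /eqP := tsign_sqr g s.
by rewrite sqrf_eq1 => /orP[/eqP->|/eqP->].
Qed.

Lemma sum_tdiag p : \sum_(i : 'I_4) tdiag p i = if p == tI then 4 else 0.
Proof. by rewrite !big_ord_recl big_ord0; case: p. Qed.

(* The trace of a tensor product is the product of the traces, and only [tI]
   has a nonzero trace. *)
Lemma ttraceE g :
  ttrace g = if g.2 == [ffun => tI] then (-1) ^+ g.1 * 4 ^+ #|T| else 0.
Proof.
rewrite /ttrace /tsign -big_distrr /=.
rewrite -(bigA_distr_bigA (fun k i => tdiag (g.2 k) i)) /=.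
under eq_bigr do rewrite sum_tdiag.
case: eqP => [->|/eqP ne].
  by rewrite (eq_bigr (fun _ => 4)) ?prodr_const // => k _; rewrite ffunE.
have [k nk] : exists k, g.2 k != tI.
  apply/existsP; apply: contraR ne; rewrite negb_exists => /forallP gI.
  by apply/eqP/ffunP => k; rewrite ffunE; apply/eqP/negPn.
by rewrite (bigD1 k) //= (negbTE nk) mul0r mulr0.
Qed.

Lemma ttrace1 : ttrace 1%g = 4 ^+ #|T|.
Proof. by rewrite ttraceE eqxx mul1r. Qed.

Lemma ttrace_le0 g : g != 1%g -> ttrace g <= 0.
Proof.
case: g => [[] f] ng; rewrite ttraceE /=; case: eqP => // gI.
  by rewrite expr1 mulN1r oppr_le0 exprn_ge0.
by rewrite gI eqxx in ng.
Qed.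

Lemma ttrace_eq0 g : g != 1%g -> g != tminus1 T -> ttrace g = 0.
Proof.
case: g => [[] f] ng nm; rewrite ttraceE /=; case: eqP => // fI;
  by move: ng nm; rewrite fI eqxx.
Qed.

Lemma epi_gen (X : {set toyP T}) : epi <<X>>%g = epi X.
Proof.
apply/setP => s; rewrite !inE; apply/forall_inP/forall_inP => fixX g gX.
  exact/fixX/mem_gen.
suff: (<<X>> \subset [set h | tfixes h s])%g by move/subsetP/(_ g gX); rewrite inE.
have fix_group : group_set [set h | tfixes h s].
  apply/group_setP; split; first by rewrite inE tfixesE tsign1.
  by move=> x y; rewrite !inE !tfixesE tsignM => /eqP-> /eqP->; rewrite mulr1.
rewrite -[[set h | _]]/(gval (Group fix_group)) gen_subG.
by apply/subsetP => h hX; rewrite inE fixX.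
Qed.

Lemma epiU (X Y : {set toyP T}) : epi (X :|: Y) = epi X :&: epi Y.
Proof.
apply/setP => s; rewrite !inE; apply/forall_inP/andP => [fixXY|].
  by split; apply/forall_inP => g gXY; apply: fixXY; rewrite inE gXY ?orbT.
by case=> /forall_inP fixX /forall_inP fixY g; rewrite inE => /orP[/fixX|/fixY].
Qed.

Section Stabilizer.
Variable K : {group toyP T}.

(* Some element of K flips the sign at s, and multiplying by it permutes K. *)
Lemma sum_tsign_notin_epi s : s \notin epi K -> \sum_(h in K) tsign h s = 0.
Proof.
rewrite inE => /forall_inPn[h0 h0K /tsign_notfixes h0s].
have : \sum_(h in K) tsign h s = tsign h0 s * \sum_(h in K) tsign h s.
  rewrite big_distrr /= (reindex_inj (mulgI h0)) /=.
  by apply: eq_big => [h|h _]; rewrite ?groupMl ?tsignM.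
by rewrite h0s mulN1r => /esym/eqP; rewrite eqNr => /eqP.
Qed.

Lemma sum_ttrace_mulr g :
  \sum_(h in K) ttrace (h * g)%g = \sum_s (\sum_(h in K) tsign h s) * tsign g s.
Proof.
under [RHS]eq_bigr do rewrite big_distrl /=.
by rewrite exchange_big; apply: eq_bigr => h _; apply: eq_bigr => s _; rewrite tsignM.
Qed.

Lemma sum_ttrace_group : tminus1 T \notin K -> \sum_(h in K) ttrace h = 4 ^+ #|T|.
Proof.
move=> nmK; rewrite (bigD1 1%g) //= ttrace1 big1 ?addr0 // => h /andP[hK h1].
by apply: ttrace_eq0 h1 _; apply: contraNneq nmK => <-.
Qed.

(* The function [s |-> \sum_(h in K) tsign h s] vanishes off [epi K], where
   [g] acts trivially, so pairing it with [tsign g] equates the sums of traces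
   over the coset [K g] and over [K].  The latter is [4 ^+ #|T|]; if [g] were
   not in [K], the coset would avoid [1] and the former would be [<= 0]. *)
Lemma mem_of_fixes_epi g :
  tminus1 T \notin K -> {in epi K, forall s, tfixes g s} -> g \in K.
Proof.
move=> nmK fixg.
have coset_sum : \sum_(h in K) ttrace (h * g)%g = \sum_(h in K) ttrace h.
  rewrite -[RHS](eq_bigr _ (fun h _ => congr1 ttrace (mulg1 h))) !sum_ttrace_mulr.
  apply: eq_bigr => s _.
  have [sK|sK] := boolP (s \in epi K); last by rewrite sum_tsign_notin_epi ?mul0r.
  by have := fixg s sK; rewrite tfixesE tsign1 => /eqP->.
apply: contraTT isT => gK.
have : \sum_(h in K) ttrace (h * g)%g <= 0.
  apply: sumr_le0 => h hK; apply: ttrace_le0; apply: contraNneq gK => hg1.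
  by rewrite -[g]mul1g -(mulVg h) -mulgA hg1 mulg1 groupV.
by rewrite coset_sum sum_ttrace_group // leNgt exprn_gt0.
Qed.

End Stabilizer.
End Sign.

Section Subsystem.
Variables (T : finType) (A : {set T}).
Implicit Types (g h : toyP T) (s : ontic T) (x : toyP (subsys A)).

Definition supported g := [forall k in ~: A, g.2 k == tI].

Definition prestrict g : toyP (subsys A) := (g.1, [ffun k => g.2 (val k)]).

Definition pextend x : toyP T :=
  (x.1, [ffun k => if insub k is Some k' then x.2 k' else tI]).

Lemma supportedP g : reflect (forall k, k \notin A -> g.2 k = tI) (supported g).
Proof.
by apply: (iffP forall_inP) => gI k; rewrite ?inE => kA; apply/eqP/gI; rewrite ?inE.
Qed.

Lemma in_local_sub (S : {set toyP T}) g :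
  (g \in local_sub S A) = (g \in S) && supported g.
Proof. by rewrite inE. Qed.

Lemma local_sub_subset (S : {set toyP T}) : local_sub S A \subset S.
Proof. by apply/subsetP => g; rewrite in_local_sub => /andP[]. Qed.

Lemma local_sub_group_set (S : {group toyP T}) : group_set (local_sub S A).
Proof.
apply/group_setP; split.
  by rewrite in_local_sub group1; apply/supportedP => k _; rewrite ffunE.
move=> g h; rewrite !in_local_sub => /andP[gS /supportedP gI] /andP[hS /supportedP hI].
by rewrite groupM //; apply/supportedP => k kA; rewrite ffunE gI ?hI.
Qed.

Canonical local_sub_group (S : {group toyP T}) := Group (local_sub_group_set S).

Lemma prestrictM : {morph prestrict : g h / (g * h)%g}.
Proof. by move=> g h; congr pair; apply/ffunP => k; rewrite !ffunE. Qed.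

Definition prestrictm := @Morphism _ _ [set: toyP T] _ (in2W prestrictM).

Lemma pextendK : cancel pextend prestrict.
Proof. by case=> b f; congr pair; apply/ffunP => k; rewrite !ffunE valK. Qed.

Lemma pextend_supported x : supported (pextend x).
Proof. by apply/supportedP => k kA; rewrite ffunE insubN. Qed.

Lemma big_subsys (R : Type) (idx : R) (op : Monoid.com_law idx) (F : T -> R) :
  (forall k, k \notin A -> F k = idx) ->
  \big[op/idx]_k F k = \big[op/idx]_(k : subsys A) F (val k).
Proof.
move=> Fidx; rewrite (bigID (mem A)) /= [X in op _ X]big1 ?Monoid.mulm1 //.
exact: big_sub.
Qed.

Lemma tfixes_prestrict g s :
  supported g -> tfixes (prestrict g) (restrict A s) = tfixes g s.
Proof.
move/supportedP=> gI; rewrite !tfixesE /tsign big_subsys => [|k /gI->//].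
by under eq_bigr do rewrite !ffunE.
Qed.

Lemma tcomm_prestrict g h : supported g -> tcomm (prestrict g) (prestrict h) = tcomm g h.
Proof.
move/supportedP=> gI; rewrite /tcomm big_subsys => [|k /gI->//].
by under eq_bigr do rewrite !ffunE.
Qed.

Lemma prestrict_eq_minus1 g :
  supported g -> prestrict g = tminus1 (subsys A) -> g = tminus1 T.
Proof.
case: g => b f /supportedP /= fI [-> /ffunP f1]; congr pair; apply/ffunP => k.
rewrite ffunE; have [kA|/fI//] := boolP (k \in A).
by have := f1 (exist _ k kA); rewrite !ffunE.
Qed.

Lemma epi_prestrict (X : {set toyP T}) s : {in X, forall g, supported g} ->
  (restrict A s \in epi (prestrict @: X)) = (s \in epi X).
Proof.
move=> Xsupp; rewrite !inE; apply/forall_inP/forall_inP => fixX g gX.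
  by rewrite -tfixes_prestrict ?Xsupp //; apply/fixX/imset_f.
by case/imsetP: gX => h hX ->; rewrite tfixes_prestrict ?fixX ?Xsupp.
Qed.

Lemma epi_prestrict_local (S : {set toyP T}) s :
  (restrict A s \in epi (prestrictm @* local_sub S A)%g) = (s \in epi (local_sub S A)).
Proof.
rewrite morphimEsub ?subsetT // epi_prestrict // => g.
by rewrite in_local_sub => /andP[].
Qed.

Lemma tstab_prestrict_local (S : {group toyP T}) :
  is_tstab S -> is_tstab (prestrictm @* local_sub S A).
Proof.
move=> [commS nmS]; split => /=; rewrite morphimEsub ?subsetT //.
  move=> _ _ /imsetP[g + ->] /imsetP[h + ->] /=.
  rewrite !in_local_sub => /andP[gS gsupp] /andP[hS _].
  by rewrite tcomm_prestrict ?commS.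
apply/imsetP => -[g]; rewrite in_local_sub => /andP[gS gsupp] /esym gm.
by move: gS; rewrite (prestrict_eq_minus1 gsupp gm) (negbTE nmS).
Qed.

Lemma valid_epi_prestrict_local (S : {group toyP T}) :
  is_tstab S -> valid_epi (epi (prestrictm @* local_sub S A)%g).
Proof.
by move=> tstabS; exists [group of (prestrictm @* local_sub S A)%g]; split;
  first exact: tstab_prestrict_local.
Qed.

Lemma pextend_local_sub (S : {group toyP T}) (S0 : {group toyP (subsys A)}) :
  tminus1 T \notin S -> {in epi S, forall s, restrict A s \in epi S0} ->
  {in S0, forall x, pextend x \in local_sub S A}.
Proof.
move=> nmS marg x xS0; rewrite in_local_sub pextend_supported andbT.
apply: mem_of_fixes_epi => // s /marg; rewrite inE => /forall_inP/(_ x xS0).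
by rewrite -{1}[x]pextendK tfixes_prestrict // pextend_supported.
Qed.

Lemma epi_local_sub_restrict (S : {group toyP T}) (S0 : {group toyP (subsys A)}) s :
  tminus1 T \notin S -> {in epi S, forall s, restrict A s \in epi S0} ->
  s \in epi (local_sub S A) -> restrict A s \in epi S0.
Proof.
move=> nmS marg; rewrite inE => /forall_inP fixL; rewrite inE; apply/forall_inP => x xS0.
rewrite -[x]pextendK tfixes_prestrict ?pextend_supported //.
exact/fixL/(pextend_local_sub nmS marg).
Qed.

End Subsystem.

Section Bipartition.
Variables (T : finType) (A : {set T}) (S : {group toyP T}).

Let SAB := <<local_sub S A :|: local_sub S (~: A)>>%g.

Lemma local_gen_of_product :
  tminus1 T \notin S -> is_product A (epi S) -> S :=: SAB.
Proof.
move=> nmS [EA [EB [[SA [_ ->]] [SB [_ ->]] epiS]]].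
have margA : {in epi S, forall s, restrict A s \in epi SA}.
  by move=> s; rewrite epiS inE => /andP[].
have margB : {in epi S, forall s, restrict (~: A) s \in epi SB}.
  by move=> s; rewrite epiS inE => /andP[].
have SAB_sub : SAB \subset S by rewrite gen_subG subUset !local_sub_subset.
apply/eqP; rewrite eqEsubset SAB_sub andbT; apply/subsetP => g gS.
apply: mem_of_fixes_epi => [|s]; first exact: contra (subsetP SAB_sub _) nmS.
rewrite epi_gen epiU inE => /andP[sA sB].
have : s \in epi S.
  rewrite epiS inE (epi_local_sub_restrict nmS margA sA).
  by rewrite (epi_local_sub_restrict nmS margB sB).
by rewrite inE => /forall_inP/(_ g gS).
Qed.

Lemma product_of_local_gen : is_tstab S -> S :=: SAB -> is_product A (epi S).
Proof.
move=> tstabS eqS.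
exists (epi (prestrictm A @* local_sub S A)%g).
exists (epi (prestrictm (~: A) @* local_sub S (~: A))%g).
split; [exact: valid_epi_prestrict_local | exact: valid_epi_prestrict_local |].
apply/setP => s; rewrite {1}eqS epi_gen epiU in_setI [in RHS]in_set.
by rewrite !epi_prestrict_local.
Qed.

End Bipartition.

Theorem mainTheorem7 (N : nat) (A : {set 'I_N}) (S : {group toyP 'I_N}) :
  is_tstab S -> max_info S ->
  (~ is_product A (epi S) <->
   (S : {set toyP 'I_N}) != <<local_sub S A :|: local_sub S (~: A)>>%g).
Proof.
move=> tstabS _; split.
  by move=> nprod; apply/eqP => eqS; apply/nprod/product_of_local_gen.
by move=> /eqP neS /(local_gen_of_product tstabS.2).
Qed.
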